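(* Let $X$ be a compact Hausdorff space and $\mathcal F$ a left ultrafunctor from $X$ to $\mathsf{k\text{-}CompMet}$. Then $E=\coprod_{x\in X}\mathcal F(x)$ equipped with the topology $\tau$ (the unique topology whose ultrafilter convergence is the relation $q$) and the projection $\pi$ is a bundle of complete metric spaces bounded by $k$ over $X$. Moreover, if $\alpha:\mathcal F\to\mathcal F'$ is a natural transformation of left ultrafunctors, the map $\psi:\coprod_x\mathcal F(x)\to\coprod_x\mathcal F'(x)$ with $\psi|_{\mathcal F(x)}=\alpha_x$ is a morphism of bundles; this defines a functor $\mathcal L:\mathrm{LeftUlt}(X,\mathsf{k\text{-}CompMet})\to\mathrm{Bun}(\mathsf{k\text{-}CompMet},X)$.
   Context: Ultrafilter conventions: $\delta_s$ principal ultrafilter; pushforward $g\mu=\{B: g^{-1}(B)\in\mu\}$; $\int_S\nu_s\,d\mu$ is the ultrafilter with $B\in\int_S\nu_sd\mu$ iff $\{s:B\in\nu_s\}\in\mu$; for compact Hausdorff $X$, $\int_Sx_s\,d\mu$ is the limit of the pushforward of $\mu$ along $s\mapsto x_s$. $\mathsf{k\text{-}CompMet}$: complete metric spaces with distances $\le k$ and 1-Lipschitz maps; ultraproduct $\int_SM_s\,d\mu=\prod_sM_s/\sim$ with $(a_s)\sim(b_s)$ iff $\lim_\mu d(a_s,b_s)=0$ and metric $\lim_\mu d(a_s,b_s)$; $\int_S\psi_sd\mu$ acts coordinatewise. Left ultrafunctor $\mathcal F$ from $X$ to $\mathsf{k\text{-}CompMet}$: objects $\mathcal F(x)$ and, for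 each set $S$, family $(x_s)$ in $X$ and ultrafilter $\mu$ on $S$, 1-Lipschitz maps $\sigma_\mu:\mathcal F(\int_Sx_sd\mu)\to\int_S\mathcal F(x_s)d\mu$ satisfying (i) compatibility with principal ultrafilters ($\sigma_{\delta_{s_0}}$ composed with $\int_S\mathcal F(x_s)d\delta_{s_0}\cong\mathcal F(x_{s_0})$ is the identity) and (ii) $\Delta\circ\sigma_{\int_S\nu_sd\mu}=(\int_S\sigma_{\nu_s}d\mu)\circ\sigma_\mu$ for all $\mu$ on $S$, $(\nu_s)$ on $T$, $(x_t)_{t\in T}$, where $\Delta((b_t)_t)=((b_t)_t)_s$. A natural transformation of left ultrafunctors $\alpha:\mathcal F\to\mathcal G$ is a family of 1-Lipschitz maps $\alpha_x$ with $\sigma^{\mathcal G}_\mu\circ\alpha_{\int x_sd\mu}=(\int_S\alpha_{x_s}d\mu)\circ\sigma^{\mathcal F}_\mu$; these form the category $\mathrm{LeftUlt}(X,\mathsf{k\text{-}CompMet})$. The relation $\eta\,q\,f$ for an ultrafilter $\eta$ on $E$ and $f\in E$: $\pi\eta\to\pi(f)$ and, for a representative $(b_x)_{x\in X}$ of $\sigma_{\pi\eta}(f)$ (for the identity family on $X$), $\coprod_xB(b_x,\epsilon)\in\eta$ for all $\epsilon>0$. Bundles: for a surjection $\pi:E\to X$ of topological spaces whose fibres $E_x=\pi^{-1}(x)$ are metric spaces, $E\times_XE=\{(f,g):\pi f=\pi g\}$ with the subspace topology of $E\times E$ and global distance $d(f,g)=d_{\pi(f)}(f,g)$; for $V\subseteq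 E$ and $\epsilon>0$, $V_\epsilon=\{f\in E:\exists g\in V,\ \pi f=\pi g,\ d(f,g)<\epsilon\}$; for open $V,W$, ''$V\subseteq_\epsilon W$'' means $V\subseteq V_\epsilon\subseteq W$. A function $h$ into $[0,\infty]$ is upper semicontinuous iff $h^{-1}([0,r))$ is open for each $r$. A bundle of complete metric spaces bounded by $k$ over $X$ is such $(E,X,\pi)$ with every fibre complete with distances $\le k$, such that (1) $d:E\times_XE\to[0,k]$ is upper semicontinuous; (2) $\pi$ is continuous and open; (3) for every open $W\subseteq E$ and $f\in W$ there exist an open neighbourhood $V$ of $f$ and $\epsilon>0$ with $V\subseteq_\epsilon W$. A morphism of bundles over $X$ is a continuous $\psi:E\to E'$ with $\pi'\circ\psi=\pi$ and each $\psi|_{E_x}$ 1-Lipschitz. This gives the category $\mathrm{Bun}(\mathsf{k\text{-}CompMet},X)$. *)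

From Stdlib Require Import Reals List Classical ClassicalEpsilon
  ClassicalDescription FunctionalExtensionality PropExtensionality.


Open Scope R_scope.

Record Ultrafilter (S : Type) := {
  umem : (S -> Prop) -> Prop;
  u_full : umem (fun _ => True);
  u_nempty : ~ umem (fun _ => False);
  u_inter : forall A B, umem A -> umem B -> umem (fun s => A s /\ B s);
  u_up : forall A B : S -> Prop, umem A -> (forall s, A s -> B s) -> umem B;
  u_ultra : forall A, umem A \/ umem (fun s => ~ A s)
}.
Arguments umem {S} u _.
Arguments u_up {S u A B} _ _.
Arguments u_inter {S u A B} _ _.

Definition principal {S : Type} (s0 : S) : Ultrafilter S.
Proof.
  refine {| umem := fun A => A s0 |}; firstorder.
  destruct (classic (A s0)); auto.
Defined.

Definition push {S T : Type} (g : S -> T) (mu : Ultrafilter S) : Ultrafilter T.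
Proof.
  refine {| umem := fun B => umem mu (fun s => B (g s)) |}.
  - exact (@u_full _ mu).
  - exact (@u_nempty _ mu).
  - intros A B HA HB; exact (u_inter HA HB).
  - intros A B HA HAB; exact (u_up HA (fun s => HAB (g s))).
  - intros A; exact (@u_ultra _ mu (fun s => A (g s))).
Defined.

(* integral  \int_S nu_s dmu :  B in it  iff  {s | B in nu_s} in mu *)
Definition ubind {S T : Type} (mu : Ultrafilter S) (nu : S -> Ultrafilter T)
  : Ultrafilter T.
Proof.
  refine {| umem := fun B => umem mu (fun s => umem (nu s) B) |}.
  - apply (u_up (@u_full _ mu)); intros s _; exact (@u_full _ (nu s)).
  - intros H. apply (@u_nempty _ mu). apply (u_up H). intros s Hs.
    exact (@u_nempty _ (nu s) Hs).
  - intros A B HA HB. apply (u_up (u_inter HA HB)). intros s [Ha Hb].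
    exact (u_inter Ha Hb).
  - intros A B HA HAB. apply (u_up HA). intros s Hs. exact (u_up Hs HAB).
  - intros A. destruct (@u_ultra _ mu (fun s => umem (nu s) A)) as [H|H]; [left; exact H|].
    right. apply (u_up H). intros s Hs.
    destruct (@u_ultra _ (nu s) A); [contradiction|assumption].
Defined.

Lemma ultrafilter_inhabited {S : Type} (mu : Ultrafilter S) : inhabited S.
Proof.
  destruct (classic (inhabited S)) as [H|H]; [exact H|].
  exfalso. apply (@u_nempty _ mu). apply (u_up (@u_full _ mu)).
  intros s _. apply H. exact (inhabits s).
Qed.

Record Topology (T : Type) := {
  isopen : (T -> Prop) -> Prop;
  op_full : isopen (fun _ => True);
  op_inter : forall U V, isopen U -> isopen V -> isopen (fun t => U t /\ V t);
  op_union : forall (I : Type) (U : I -> T -> Prop),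
      (forall i, isopen (U i)) -> isopen (fun t => exists i, U i t)
}.
Arguments isopen {T} t _.

Definition conv {T : Type} (t : Topology T) (mu : Ultrafilter T) (x : T) : Prop :=
  forall U, isopen t U -> U x -> umem mu U.

Definition compact_space {X : Type} (t : Topology X) : Prop :=
  forall (I : Type) (U : I -> X -> Prop),
    (forall i, isopen t (U i)) -> (forall x, exists i, U i x) ->
    exists l : list I, forall x, exists i, In i l /\ U i x.

Definition hausdorff_space {X : Type} (t : Topology X) : Prop :=
  forall x y : X, x <> y -> exists U V, isopen t U /\ isopen t V /\ U x /\ V y /\
    forall z, ~ (U z /\ V z).

(* \int_S x_s dmu : a (for compact Hausdorff X: the) limit of the pushforward
   of mu along s |-> x_s *)
Definition ulim {S X : Type} (t : Topology X) (x : S -> X) (mu : Ultrafilter S) : X :=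
  epsilon (match ultrafilter_inhabited mu with inhabits s => inhabits (x s) end)
          (fun y => conv t (push x mu) y).

Definition rlim {S : Type} (mu : Ultrafilter S) (f : S -> R) : R :=
  epsilon (inhabits 0)
    (fun r => forall eps, eps > 0 -> umem mu (fun s => Rabs (f s - r) < eps)).

Record MSp := { car :> Type; dst : car -> car -> R }.
Arguments dst {m} _ _.

Definition cauchy_seq (M : MSp) (u : nat -> M) : Prop :=
  forall eps, eps > 0 -> exists N, forall m n, (N <= m)%nat -> (N <= n)%nat ->
    dst (u m) (u n) < eps.
Arguments cauchy_seq {M} u.

Definition is_kcompmet (k : R) (M : MSp) : Prop :=
  inhabited M /\
  (forall x : M, dst x x = 0) /\
  (forall x y : M, dst x y = 0 -> x = y) /\
  (forall x y : M, dst x y = dst y x) /\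
  (forall x y z : M, dst x z <= dst x y + dst y z) /\
  (forall x y : M, dst x y <= k) /\
  (forall u : nat -> M, cauchy_seq u -> exists l : M,
      forall eps, eps > 0 -> exists N, forall n, (N <= n)%nat -> dst (u n) l < eps).

Record CompMet (k : R) := { cm :> MSp; cm_ax : is_kcompmet k cm }.
Arguments cm {k} _.
Arguments cm_ax {k} _.

Definition uprel {S : Type} (M : S -> MSp) (mu : Ultrafilter S)
  (a b : forall s, M s) : Prop :=
  rlim mu (fun s => dst (a s) (b s)) = 0.

(* equivalence classes of the product under ~ *)
Definition UPcar {S : Type} (M : S -> MSp) (mu : Ultrafilter S) : Type :=
  { P : (forall s, M s) -> Prop | exists a, P = uprel M mu a }.

Definition up_class {S : Type} (M : S -> MSp) (mu : Ultrafilter S)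
  (a : forall s, M s) : UPcar M mu :=
  exist _ (uprel M mu a) (ex_intro _ a eq_refl).

Definition up_rep {S : Type} {M : S -> MSp} {mu : Ultrafilter S}
  (p : UPcar M mu) : forall s, M s :=
  proj1_sig (constructive_indefinite_description _ (proj2_sig p)).

Definition is_rep {S : Type} {M : S -> MSp} {mu : Ultrafilter S}
  (p : UPcar M mu) (b : forall s, M s) : Prop := proj1_sig p b.

Definition UP {S : Type} (M : S -> MSp) (mu : Ultrafilter S) : MSp :=
  {| car := UPcar M mu;
     dst := fun p q => rlim mu (fun s => dst (up_rep p s) (up_rep q s)) |}.

Definition up_map {S : Type} {M N : S -> MSp} {mu : Ultrafilter S}
  (psi : forall s, M s -> N s) (p : UP M mu) : UP N mu :=
  up_class N mu (fun s => psi s (up_rep p s)).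

Definition up_diag {S T : Type} {M : T -> MSp} {mu : Ultrafilter S}
  {nu : S -> Ultrafilter T} (p : UP M (ubind mu nu))
  : UP (fun s => UP M (nu s)) mu :=
  up_class (fun s => UP M (nu s)) mu (fun s => up_class M (nu s) (up_rep p)).

Record LeftUlt (k : R) (X : Type) (tX : Topology X) := {
  LF : X -> CompMet k;
  sigma : forall (S : Type) (x : S -> X) (mu : Ultrafilter S),
      cm (LF (ulim tX x mu)) -> UP (fun s => cm (LF (x s))) mu;
  sigma_lip : forall S x mu (f g : cm (LF (ulim tX x mu))),
      dst (sigma S x mu f) (sigma S x mu g) <= dst f g;
  (* (i): sigma_{delta_s0} followed by \int F(x_s) d delta_s0 ~= F(x_s0) is
     the identity (the two sides seen in the coproduct of the F(x)) *)
  sigma_principal : forall S (x : S -> X) (s0 : S)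
      (f : cm (LF (ulim tX x (principal s0)))),
      existT (fun y => car (cm (LF y))) (x s0)
             (up_rep (sigma S x (principal s0) f) s0)
      = existT (fun y => car (cm (LF y))) (ulim tX x (principal s0)) f;
  (* (ii): Delta o sigma_{\int nu_s dmu} = (\int sigma_{nu_s} dmu) o sigma_mu,
     the two domains being identified (as the same point of X) *)
  sigma_assoc : forall (S T : Type) (mu : Ultrafilter S)
      (nu : S -> Ultrafilter T) (x : T -> X)
      (f : cm (LF (ulim tX x (ubind mu nu))))
      (g : cm (LF (ulim tX (fun s => ulim tX x (nu s)) mu))),
      existT (fun y => car (cm (LF y))) _ f = existT (fun y => car (cm (LF y))) _ g ->
      up_diag (sigma T x (ubind mu nu) f)
      = up_map (fun s => sigma T x (nu s))
               (sigma S (fun s => ulim tX x (nu s)) mu g)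
}.
Arguments LF {k X tX} _ _.
Arguments sigma {k X tX} _ _ _ _ _.

Definition is_nat_trans {k : R} {X : Type} {tX : Topology X}
  (F G : LeftUlt k X tX) (alpha : forall x, cm (LF F x) -> cm (LF G x)) : Prop :=
  (forall x (f g : cm (LF F x)), dst (alpha x f) (alpha x g) <= dst f g) /\
  (forall S (x : S -> X) (mu : Ultrafilter S) (f : cm (LF F (ulim tX x mu))),
      sigma G S x mu (alpha (ulim tX x mu) f)
      = up_map (fun s => alpha (x s)) (sigma F S x mu f)).

Definition Tot {k : R} {X : Type} {tX : Topology X} (F : LeftUlt k X tX) : Type :=
  { x : X & car (cm (LF F x)) }.

Definition totproj {k : R} {X : Type} {tX : Topology X} {F : LeftUlt k X tX}
  (e : Tot F) : X := projT1 e.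

Definition totdist {k : R} {X : Type} {tX : Topology X} (F : LeftUlt k X tX)
  (e1 e2 : Tot F) (h : totproj e1 = totproj e2) : R :=
  dst (eq_rect _ (fun y => car (cm (LF F y))) (projT2 e1) _ h) (projT2 e2).

Definition qrel {k : R} {X : Type} {tX : Topology X} (F : LeftUlt k X tX)
  (eta : Ultrafilter (Tot F)) (f : Tot F) : Prop :=
  conv tX (push totproj eta) (totproj f) /\
  forall (g : cm (LF F (ulim tX (fun x : X => x) (push totproj eta)))),
    existT (fun y => car (cm (LF F y))) _ g = f ->
    forall b : forall x : X, car (cm (LF F x)),
      is_rep (sigma F X (fun x : X => x) (push totproj eta) g) b ->
      forall eps, eps > 0 ->
        umem eta (fun e : Tot F => dst (projT2 e) (b (projT1 e)) < eps).

Definition totmap {k : R} {X : Type} {tX : Topology X} {F G : LeftUlt k X tX}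
  (alpha : forall x, cm (LF F x) -> cm (LF G x)) (e : Tot F) : Tot G :=
  existT _ (projT1 e) (alpha (projT1 e) (projT2 e)).

Definition prod_open {E E' : Type} (tE : Topology E) (tE' : Topology E')
  (O : E * E' -> Prop) : Prop :=
  forall p, O p -> exists A B, isopen tE A /\ isopen tE' B /\ A (fst p) /\ B (snd p) /\
    forall a b, A a -> B b -> O (a, b).

Definition continuous_map {A B : Type} (tA : Topology A) (tB : Topology B)
  (f : A -> B) : Prop :=
  forall V, isopen tB V -> isopen tA (fun a => V (f a)).

Definition open_map {A B : Type} (tA : Topology A) (tB : Topology B)
  (f : A -> B) : Prop :=
  forall U, isopen tA U -> isopen tB (fun b => exists a, U a /\ f a = b).

Definition is_bundle (k : R) {E X : Type} (tE : Topology E) (tX : Topology X)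
  (pi : E -> X) (d : forall f g : E, pi f = pi g -> R) : Prop :=
  (forall x, exists e, pi e = x) /\
  (forall f (h : pi f = pi f), d f f h = 0) /\
  (forall f g (h : pi f = pi g), d f g h = 0 -> f = g) /\
  (forall f g (h : pi f = pi g), d f g h = d g f (eq_sym h)) /\
  (forall f g e (h1 : pi f = pi g) (h2 : pi g = pi e) (h3 : pi f = pi e),
      d f e h3 <= d f g h1 + d g e h2) /\
  (forall f g (h : pi f = pi g), d f g h <= k) /\
  (forall (x : X) (u : nat -> E), (forall n, pi (u n) = x) ->
     (forall eps, eps > 0 -> exists N, forall m n (h : pi (u m) = pi (u n)),
        (N <= m)%nat -> (N <= n)%nat -> d (u m) (u n) h < eps) ->
     exists l, pi l = x /\
       forall eps, eps > 0 -> exists N, forall n (h : pi (u n) = pi l),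
         (N <= n)%nat -> d (u n) l h < eps) /\
  (* (1) d : E x_X E -> [0,k] is upper semicontinuous (subspace topology) *)
  (forall r : R, exists O, prod_open tE tE O /\
     forall f g (h : pi f = pi g), d f g h < r <-> O (f, g)) /\
  continuous_map tE tX pi /\ open_map tE tX pi /\
  (forall (W : E -> Prop) (f : E), isopen tE W -> W f ->
     exists (V : E -> Prop) (eps : R), isopen tE V /\ V f /\ eps > 0 /\
       let Veps := fun e => exists g (h : pi e = pi g), V g /\ d e g h < eps in
       (forall e, V e -> Veps e) /\ (forall e, Veps e -> W e)).

Definition is_bundle_morphism {E E' X : Type} (tE : Topology E) (tE' : Topology E')
  (pi : E -> X) (pi' : E' -> X)
  (d : forall f g : E, pi f = pi g -> R) (d' : forall f g : E', pi' f = pi' g -> R)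
  (psi : E -> E') : Prop :=
  continuous_map tE tE' psi /\
  (forall e, pi' (psi e) = pi e) /\
  (forall f g (h : pi f = pi g) (h' : pi' (psi f) = pi' (psi g)),
      d' (psi f) (psi g) h' <= d f g h).

(* The topology is the one whose open sets are the q-open sets; its convergence is exactly q
   because q satisfies Barr's axioms: [principal f] q-converges to [f] by the unit axiom (i) of
   sigma, and q is closed under [ubind] by the associativity axiom (ii) combined with the
   Lipschitz property of sigma.  Everything else is checked on ultrafilters.  Over an
   ultrafilter of base points, sigma provides a family of representatives against which
   q-convergence is measured, so the triangle inequality turns the q-convergence of two
   ultrafilters into upper semicontinuity of the distance and into the thickening property (3);
   [totproj] is open because every point is a q-limit of the pushforward of the base ultrafilter
   along its representatives.  Naturality of alpha transports representatives, hence q, which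
   makes [totmap alpha] continuous. *)

From Stdlib Require Import Reals List Classical ClassicalEpsilon
  FunctionalExtensionality PropExtensionality ProofIrrelevance Lra.
From mathcomp Require filter.
Open Scope R_scope.

(** * Ultrafilters and convergence *)

Lemma ultrafilter_extension (T : Type) (B : (T -> Prop) -> Prop) :
  B (fun _ => True) ->
  (forall P Q, B P -> B Q -> B (fun t => P t /\ Q t)) ->
  (forall P, B P -> exists t, P t) ->
  exists U : Ultrafilter T, forall P, B P -> umem U P.
Proof.
  intros BT BI Binh.
  pose (G := fun P => exists Q, B Q /\ forall t, Q t -> P t).
  assert (PG : mathcomp.classical.filter.ProperFilter G).
  { constructor.
    - intros [Q [BQ sQ]]. destruct (Binh Q BQ) as [t Qt]. exact (sQ t Qt).
    - constructor.
      + exists (fun _ => True). split; auto.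
      + intros P Q [P' [BP sP]] [Q' [BQ sQ]]. exists (fun t => P' t /\ Q' t).
        split; [apply BI; auto|]. intros t [a b]; split; auto.
      + intros P Q PQ [P' [BP sP]]. exists P'; split; auto. }
  destruct (mathcomp.classical.filter.ultraFilterLemma PG) as [H [UH sGH]].
  pose proof (@mathcomp.classical.filter.ultra_proper T H UH) as PH.
  pose proof (@mathcomp.classical.filter.filter_filter T H PH) as FH.
  unshelve eexists {| umem := H |}.
  - apply sGH. exists (fun _ => True); split; auto.
  - exact (@mathcomp.classical.filter.filter_not_empty T H PH).
  - exact (@mathcomp.classical.filter.filterI T H FH).
  - intros P Q HP PQ. exact (@mathcomp.classical.filter.filterS T H FH P Q PQ HP).
  - intro P. exact (mathcomp.classical.filter.in_ultra_setVsetC P UH).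
  - intros P BP. apply sGH. exists P; split; auto.
Qed.

Lemma ultrafilter_ext {S} (u v : Ultrafilter S) :
  (forall A, umem u A <-> umem v A) -> u = v.
Proof.
  intros H. destruct u as [mu a b c d e], v as [mv a' b' c' d' e']. simpl in H.
  assert (mu = mv) by (apply functional_extensionality; intro A;
                       apply propositional_extensionality; apply H).
  subst mv. f_equal; apply proof_irrelevance.
Qed.

Lemma umem_all {S} (u : Ultrafilter S) A : (forall s, A s) -> umem u A.
Proof. intros H; apply (u_up (u_full _ u)); auto. Qed.

Lemma umem_exists {S} (u : Ultrafilter S) A : umem u A -> exists s, A s.
Proof.
  intros H. apply NNPP; intro N. apply (u_nempty _ u). apply (u_up H).
  intros s As. apply N. eauto.
Qed.

Lemma umem_compl {S} (u : Ultrafilter S) A : umem u A -> ~ umem u (fun s => ~ A s).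
Proof. intros H1 H2. apply (u_nempty _ u). apply (u_up (u_inter H1 H2)). tauto. Qed.

Lemma umem_and3 {S} (u : Ultrafilter S) A B C :
  umem u A -> umem u B -> umem u C -> umem u (fun s => A s /\ B s /\ C s).
Proof. intros a b c. apply (u_up (u_inter a (u_inter b c))). auto. Qed.

Lemma umem_congr {S} (u : Ultrafilter S) (E A B : S -> Prop) :
  umem u E -> (forall s, E s -> (A s <-> B s)) -> umem u A -> umem u B.
Proof.
  intros HE H HA. apply (u_up (u_inter HE HA)). intros s [e a]. apply (H s e); auto.
Qed.

Lemma ultrafilter_le_eq {S} (u v : Ultrafilter S) :
  (forall A, umem u A -> umem v A) -> u = v.
Proof.
  intros H; apply ultrafilter_ext; intro A; split; [apply H|].
  intro HA. destruct (u_ultra _ u A) as [|Hn]; auto.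
  exfalso. exact (umem_compl v A HA (H _ Hn)).
Qed.

Lemma push_id {S} (u : Ultrafilter S) : push (fun s => s) u = u.
Proof. apply ultrafilter_ext; intros; simpl; tauto. Qed.

Lemma push_principal {S T} (f : S -> T) s0 : push f (principal s0) = principal (f s0).
Proof. apply ultrafilter_ext; intros; simpl; tauto. Qed.

Lemma push_const {S T} (u : Ultrafilter S) (t : T) : push (fun _ => t) u = principal t.
Proof.
  apply ultrafilter_ext; intros A; simpl; split.
  - intro H. destruct (umem_exists _ _ H); auto.
  - intro H. apply umem_all; auto.
Qed.

Lemma push_ubind {S T U} (mu : Ultrafilter S) (nu : S -> Ultrafilter T) (g : T -> U) :
  push g (ubind mu nu) = ubind mu (fun s => push g (nu s)).
Proof. apply ultrafilter_ext; intros; simpl; tauto. Qed.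

Lemma conv_principal {T} (t : Topology T) (a : T) : conv t (principal a) a.
Proof. intros U _ Ua. exact Ua. Qed.

Lemma conv_ubind {S T} (t : Topology T) (mu : Ultrafilter S) (nu : S -> Ultrafilter T)
  (x : S -> T) z :
  (forall s, conv t (nu s) (x s)) -> conv t (push x mu) z -> conv t (ubind mu nu) z.
Proof.
  intros H1 H2 U oU Uz. pose proof (H2 U oU Uz) as h. cbn in h |- *.
  apply (u_up h). intros s Us. exact (H1 s U oU Us).
Qed.

Lemma nbhd_of_conv {T} (t : Topology T) (e : T) (N : T -> Prop) :
  (forall eta, conv t eta e -> umem eta N) ->
  exists V, isopen t V /\ V e /\ forall a, V a -> N a.
Proof.
  intros H. apply NNPP; intro Hn.
  destruct (ultrafilter_extension T
    (fun A => exists V, isopen t V /\ V e /\ forall a, V a /\ ~ N a -> A a)) as [eta Heta].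
  - exists (fun _ => True). split; [apply op_full|]. split; auto.
  - intros A B [V [oV [Ve HV]]] [W [oW [We HW]]].
    exists (fun a => V a /\ W a). split; [apply op_inter; auto|]. split; auto.
    intros a [[Va Wa] Na]. split; auto.
  - intros A [V [oV [Ve HV]]]. apply NNPP; intro NA. apply Hn. exists V.
    split; auto. split; auto. intros a Va. apply NNPP; intro Na. apply NA. exists a. auto.
  - apply (umem_compl eta N).
    + apply H. intros U oU Ue. apply Heta. exists U. split; auto. split; auto. tauto.
    + apply Heta. exists (fun _ => True). split; [apply op_full|]. split; auto. tauto.
Qed.

Lemma open_of_conv {T} (t : Topology T) (U : T -> Prop) :
  (forall eta e, conv t eta e -> U e -> umem eta U) -> isopen t U.
Proof.
  intros H.
  pose (I := { V : T -> Prop | isopen t V /\ forall a, V a -> U a }).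
  assert (E : (fun a => exists i : I, proj1_sig i a) = U).
  { apply functional_extensionality; intro a; apply propositional_extensionality; split.
    - intros [i Va]; exact (proj2 (proj2_sig i) a Va).
    - intro Ua. destruct (nbhd_of_conv t a U (fun eta c => H eta a c Ua)) as [V [oV [Va HV]]].
      exists (exist _ V (conj oV HV)). exact Va. }
  rewrite <- E. apply op_union. intro i; exact (proj1 (proj2_sig i)).
Qed.

Lemma prod_nbhd_of_conv {A B} (tA : Topology A) (tB : Topology B) a b (N : A * B -> Prop) :
  (forall zeta : Ultrafilter (A * B),
     conv tA (push fst zeta) a -> conv tB (push snd zeta) b -> umem zeta N) ->
  exists U V, isopen tA U /\ isopen tB V /\ U a /\ V b /\
    forall a' b', U a' -> V b' -> N (a', b').
Proof.
  intros H. apply NNPP; intro Hn.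
  destruct (ultrafilter_extension (A * B) (fun P => exists U V, isopen tA U /\ isopen tB V /\
     U a /\ V b /\ forall p, U (fst p) -> V (snd p) -> ~ N p -> P p)) as [zeta Hz].
  - exists (fun _ => True), (fun _ => True). repeat split; try apply op_full; auto.
  - intros P Q [U1 [V1 [oU1 [oV1 [U1a [V1b H1]]]]]] [U2 [V2 [oU2 [oV2 [U2a [V2b H2]]]]]].
    exists (fun a' => U1 a' /\ U2 a'), (fun b' => V1 b' /\ V2 b').
    repeat split; try apply op_inter; auto; [apply H1|apply H2]; tauto.
  - intros P [U [V [oU [oV [Ua [Vb HP]]]]]]. apply NNPP; intro NP. apply Hn.
    exists U, V. repeat split; auto. intros a' b' Ua' Vb'. apply NNPP; intro Nn.
    apply NP. exists (a', b'). apply HP; auto.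
  - apply (umem_compl zeta N).
    + apply H.
      * intros U oU Ua. apply Hz. exists U, (fun _ => True).
        repeat split; try apply op_full; auto.
      * intros V oV Vb. apply Hz. exists (fun _ => True), V.
        repeat split; try apply op_full; auto.
    + apply Hz. exists (fun _ => True), (fun _ => True).
      repeat split; try apply op_full; auto.
Qed.

Section CompactHausdorff.
Context {X : Type} (tX : Topology X) (cX : compact_space tX) (hX : hausdorff_space tX).

Lemma conv_unique (mu : Ultrafilter X) a b : conv tX mu a -> conv tX mu b -> a = b.
Proof.
  intros Ha Hb. apply NNPP; intro N.
  destruct (hX a b N) as [U [V [oU [oV [Ua [Vb D]]]]]].
  apply (u_nempty _ mu). apply (u_up (u_inter (Ha U oU Ua) (Hb V oV Vb))).
  intros s Hs. apply (D s Hs).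
Qed.

Lemma conv_exists (mu : Ultrafilter X) : exists a, conv tX mu a.
Proof.
  apply NNPP; intro N.
  pose (I := { U : X -> Prop | isopen tX U /\ ~ umem mu U }).
  assert (cover : forall a, exists i : I, proj1_sig i a).
  { intro a. apply NNPP; intro N2. apply N. exists a. intros U oU Ua.
    apply NNPP; intro N3. apply N2. exists (exist _ U (conj oU N3)). exact Ua. }
  destruct (cX I (fun i => proj1_sig i) (fun i => proj1 (proj2_sig i)) cover) as [l Hl].
  assert (Hc : forall l : list I, umem mu (fun x => forall i, In i l -> ~ proj1_sig i x)).
  { intro l0; induction l0 as [|[U [oU nU]] l0 IH].
    - apply umem_all. intros x i [].
    - destruct (u_ultra _ mu U) as [|HnU]; [contradiction|].
      apply (u_up (u_inter HnU IH)). intros x [h1 h2] j [<-|Hj]; simpl; auto. }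
  destruct (umem_exists _ _ (Hc l)) as [x Hx]. destruct (Hl x) as [i [Hi Ux]].
  exact (Hx i Hi Ux).
Qed.

Lemma ulim_conv {S} (x : S -> X) (mu : Ultrafilter S) : conv tX (push x mu) (ulim tX x mu).
Proof. unfold ulim. apply epsilon_spec, conv_exists. Qed.

Lemma ulim_eq {S} (x : S -> X) (mu : Ultrafilter S) y :
  conv tX (push x mu) y -> ulim tX x mu = y.
Proof. intro H. apply (conv_unique (push x mu)); auto. apply ulim_conv. Qed.

Lemma ulim_principal {S} (x : S -> X) s0 : ulim tX x (principal s0) = x s0.
Proof. apply ulim_eq. rewrite push_principal. apply conv_principal. Qed.

Lemma ulim_id (mu : Ultrafilter X) y : conv tX mu y -> ulim tX (fun x => x) mu = y.
Proof. intro H. apply ulim_eq. rewrite push_id. exact H. Qed.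

End CompactHausdorff.

(** * Ultralimits and ultraproducts *)

Section UltraLimit.
Context {S : Type} (mu : Ultrafilter S) (f : S -> R) (K : R).
Hypothesis f_bounded : forall s, Rabs (f s) <= K.

Lemma rlim_exists :
  exists r, forall eps, eps > 0 -> umem mu (fun s => Rabs (f s - r) < eps).
Proof.
  assert (f_between : forall s, - K <= f s <= K).
  { intro s. pose proof (Rle_abs (f s)). pose proof (Rle_abs (- f s)).
    rewrite Rabs_Ropp in *. pose proof (f_bounded s). lra. }
  (* the ultralimit is the supremum of the eventual lower bounds of f *)
  pose (A := fun t => umem mu (fun s => t <= f s)).
  assert (bA : bound A).
  { exists (K + 1). intros t At. apply Rnot_lt_le; intro Ht.
    apply (u_nempty _ mu). apply (u_up At). intros s Hs. pose proof (f_between s). lra. }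
  assert (nA : exists t, A t).
  { exists (- K). apply umem_all. intros s. apply f_between. }
  destruct (completeness A bA nA) as [r [ub lub]].
  exists r. intros eps He.
  assert (below : exists t, A t /\ t > r - eps).
  { apply NNPP; intro N. assert (r <= r - eps); [|lra].
    apply lub. intros t At. apply Rnot_lt_le; intro Ht. apply N. exists t; split; auto; lra. }
  destruct below as [t [At Ht]].
  assert (above : ~ A (r + eps / 2)) by (intro H; pose proof (ub _ H); lra).
  destruct (u_ultra _ mu (fun s => r + eps / 2 <= f s)) as [H|H]; [contradiction|].
  apply (u_up (u_inter At H)). intros s [a b]. apply Rabs_def1; lra.
Qed.

Lemma rlim_spec :
  forall eps, eps > 0 -> umem mu (fun s => Rabs (f s - rlim mu f) < eps).
Proof.
  unfold rlim. apply (epsilon_spec (inhabits 0)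
     (fun r => forall eps, eps > 0 -> umem mu (fun s => Rabs (f s - r) < eps))).
  apply rlim_exists.
Qed.

Lemma rlim_unique r :
  (forall eps, eps > 0 -> umem mu (fun s => Rabs (f s - r) < eps)) -> rlim mu f = r.
Proof.
  intros H. apply NNPP; intro N.
  pose (e := Rabs (rlim mu f - r) / 2).
  assert (He : e > 0).
  { unfold e. assert (0 < Rabs (rlim mu f - r)); [|lra].
    apply Rabs_pos_lt. intro; apply N; lra. }
  destruct (umem_exists _ _ (u_inter (H e He) (rlim_spec e He))) as [s [a b]].
  assert (Rabs (rlim mu f - r) <= Rabs (f s - r) + Rabs (f s - rlim mu f)).
  { replace (rlim mu f - r) with ((f s - r) - (f s - rlim mu f)) by ring.
    eapply Rle_trans; [apply Rabs_triang|]. rewrite Rabs_Ropp. lra. }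
  unfold e in *. lra.
Qed.

Lemma rlim_lt c : rlim mu f < c -> umem mu (fun s => f s < c).
Proof.
  intros H. apply (u_up (rlim_spec (c - rlim mu f) ltac:(lra))).
  intros s h. apply Rabs_def2 in h. lra.
Qed.

Lemma rlim_gt c : c < rlim mu f -> umem mu (fun s => c < f s).
Proof.
  intros H. apply (u_up (rlim_spec (rlim mu f - c) ltac:(lra))).
  intros s h. apply Rabs_def2 in h. lra.
Qed.

Lemma rlim_le c : umem mu (fun s => f s <= c) -> rlim mu f <= c.
Proof.
  intros H. apply Rnot_lt_le; intro Hc.
  apply (umem_compl mu _ H). apply (u_up (rlim_gt c Hc)). intros; lra.
Qed.

Lemma rlim_ge c : umem mu (fun s => c <= f s) -> c <= rlim mu f.
Proof.
  intros H. apply Rnot_lt_le; intro Hc.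
  apply (umem_compl mu _ H). apply (u_up (rlim_lt c Hc)). intros; lra.
Qed.

End UltraLimit.

Lemma rlim_eq0 {S} (mu : Ultrafilter S) (f : S -> R) K : (forall s, 0 <= f s <= K) ->
  rlim mu f = 0 <-> forall eps, eps > 0 -> umem mu (fun s => f s < eps).
Proof.
  intros HK.
  assert (HK' : forall s, Rabs (f s) <= K).
  { intro s. rewrite Rabs_right; [apply HK|]. apply Rle_ge, HK. }
  split.
  - intros H eps He. apply (rlim_lt mu f K HK'). lra.
  - intros H. apply (rlim_unique mu f K HK'). intros eps He.
    apply (u_up (H eps He)). intros s h. rewrite Rminus_0_r, Rabs_right; auto.
    apply Rle_ge, HK.
Qed.

Definition bounded_dist (k : R) (M : MSp) : Prop :=
  (forall x : M, dst x x = 0) /\ (forall x y : M, 0 <= dst x y <= k).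

Lemma kcompmet_bounded_dist k M : is_kcompmet k M -> bounded_dist k M.
Proof.
  intros [_ [h0 [_ [hs [ht [hk _]]]]]]. split; auto.
  intros x y. split; auto.
  pose proof (ht x y x) as H. rewrite h0, (hs y x) in H. lra.
Qed.

Lemma kcompmet_triangle k (M : MSp) : is_kcompmet k M ->
  forall x y z : M, dst x z <= dst x y + dst y z.
Proof. intros [_ [_ [_ [_ [ht _]]]]]; exact ht. Qed.

Lemma kcompmet_sym k (M : MSp) : is_kcompmet k M -> forall x y : M, dst x y = dst y x.
Proof. intros [_ [_ [_ [hs _]]]]; exact hs. Qed.

Lemma kcompmet_sep k (M : MSp) : is_kcompmet k M -> forall x y : M, dst x y = 0 -> x = y.
Proof. intros [_ [_ [hz _]]]; exact hz. Qed.

Section Ultraproduct.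
Context {k : R} {S : Type} (M : S -> MSp) (mu : Ultrafilter S).
Hypothesis M_bounded : forall s, bounded_dist k (M s).

Definition up_close (a b : forall s, M s) : Prop :=
  forall eps, eps > 0 -> umem mu (fun s => dst (a s) (b s) < eps).

Lemma Rabs_dst_le s (x y : M s) : Rabs (dst x y) <= k.
Proof.
  destruct (M_bounded s) as [_ h]. rewrite Rabs_right; [apply h|apply Rle_ge, h].
Qed.

Lemma uprel_close a b : uprel M mu a b <-> up_close a b.
Proof. apply (rlim_eq0 mu _ k). intro s. apply (M_bounded s). Qed.

Lemma up_close_refl a : up_close a a.
Proof. intros eps He. apply umem_all. intro s. rewrite (proj1 (M_bounded s)). lra. Qed.

Lemma up_rep_spec (p : UPcar M mu) : proj1_sig p = uprel M mu (up_rep p).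
Proof.
  unfold up_rep. destruct (constructive_indefinite_description _ (proj2_sig p)) as [a Ha].
  exact Ha.
Qed.

Lemma is_rep_close (p : UPcar M mu) b : is_rep p b <-> up_close (up_rep p) b.
Proof. unfold is_rep. rewrite up_rep_spec. apply uprel_close. Qed.

Lemma is_rep_up_rep (p : UPcar M mu) : is_rep p (up_rep p).
Proof. apply is_rep_close, up_close_refl. Qed.

Lemma up_rep_class a : up_close (up_rep (up_class M mu a)) a.
Proof. apply uprel_close. rewrite <- up_rep_spec. apply uprel_close, up_close_refl. Qed.

Lemma up_class_inj a b : up_class M mu a = up_class M mu b -> up_close a b.
Proof.
  intro H. apply (f_equal (@proj1_sig _ _)) in H. simpl in H.
  apply uprel_close. rewrite H. apply uprel_close, up_close_refl.
Qed.

Lemma UP_bounded_dist : bounded_dist k (UP M mu).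
Proof.
  split.
  - intros p. simpl. apply (rlim_unique mu _ k).
    + intro s. apply Rabs_dst_le.
    + intros eps He. apply umem_all. intro s. rewrite (proj1 (M_bounded s)).
      rewrite Rminus_0_r, Rabs_R0. lra.
  - intros p q. simpl. split.
    + apply (rlim_ge mu _ k); [intro s; apply Rabs_dst_le|].
      apply umem_all. intro s. apply (M_bounded s).
    + apply (rlim_le mu _ k); [intro s; apply Rabs_dst_le|].
      apply umem_all. intro s. apply (M_bounded s).
Qed.

End Ultraproduct.

(** * The total space of a left ultrafunctor *)

Section TotalSpace.
Context {k : R} {X : Type} {tX : Topology X} {F : LeftUlt k X tX}.
Local Notation Fib y := (car (cm (LF F y))).

Lemma fiber_kcompmet y : is_kcompmet k (cm (LF F y)).
Proof. exact (cm_ax (LF F y)). Qed.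

Lemma fiber_bounded y : bounded_dist k (cm (LF F y)).
Proof. apply kcompmet_bounded_dist, fiber_kcompmet. Qed.

Lemma totdist_existT y (a b : Fib y) (h : y = y) :
  totdist F (existT _ y a) (existT _ y b) h = dst a b.
Proof. rewrite (proof_irrelevance _ h eq_refl). reflexivity. Qed.

Lemma totdist_congr e1 e2 e1' e2' h h' : e1 = e1' -> e2 = e2' ->
  totdist F e1 e2 h = totdist F e1' e2' h'.
Proof. intros E1 E2. subst. f_equal. apply proof_irrelevance. Qed.

Definition dist_lt (e1 e2 : Tot F) (r : R) : Prop :=
  exists h : projT1 e1 = projT1 e2, totdist F e1 e2 h < r.

Lemma dist_ltE e1 e2 (h : totproj e1 = totproj e2) r :
  dist_lt e1 e2 r <-> totdist F e1 e2 h < r.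
Proof.
  split; [|intro H; exists h; exact H].
  intros [h' H]. rewrite (proof_irrelevance _ h h'). exact H.
Qed.

Lemma dist_lt_existT y (a b : Fib y) r : dist_lt (existT _ y a) (existT _ y b) r <-> dst a b < r.
Proof.
  split; [intros [h H]; rewrite totdist_existT in H; exact H|intro H; exists eq_refl; exact H].
Qed.

Lemma dist_lt_fiber {e1 e2 r} : dist_lt e1 e2 r -> projT1 e1 = projT1 e2.
Proof. intros [h _]; exact h. Qed.

Lemma dist_lt_sym {e1 e2 r} : dist_lt e1 e2 r -> dist_lt e2 e1 r.
Proof.
  destruct e1 as [y1 a1], e2 as [y2 a2]. intros H.
  pose proof (dist_lt_fiber H) as h. simpl in h. subst.
  apply dist_lt_existT. apply dist_lt_existT in H.
  rewrite (kcompmet_sym k _ (fiber_kcompmet _)). exact H.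
Qed.

Lemma dist_lt_trans {e1 e2 e3 r s} : dist_lt e1 e2 r -> dist_lt e2 e3 s -> dist_lt e1 e3 (r + s).
Proof.
  destruct e1 as [y1 a1], e2 as [y2 a2], e3 as [y3 a3]. intros H H'.
  pose proof (dist_lt_fiber H) as h. pose proof (dist_lt_fiber H') as h'.
  simpl in h, h'. subst.
  apply dist_lt_existT. apply dist_lt_existT in H. apply dist_lt_existT in H'.
  pose proof (kcompmet_triangle k _ (fiber_kcompmet y3) a1 a2 a3). lra.
Qed.

Lemma dist_lt_le {e1 e2 r s} : dist_lt e1 e2 r -> r <= s -> dist_lt e1 e2 s.
Proof. intros [h H] Hr. exists h. lra. Qed.

Lemma dist_lt_refl e r : r > 0 -> dist_lt e e r.
Proof.
  destruct e as [y a]. intro. apply dist_lt_existT. rewrite (proj1 (fiber_bounded y)). lra.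
Qed.

Lemma dist_lt_eq e1 e2 : (forall eps, eps > 0 -> dist_lt e1 e2 eps) -> e1 = e2.
Proof.
  destruct e1 as [y1 a1], e2 as [y2 a2]. intros H.
  pose proof (dist_lt_fiber (H 1 ltac:(lra))) as h. simpl in h. subst.
  f_equal. apply (kcompmet_sep k _ (fiber_kcompmet y2)).
  apply Rle_antisym; [|apply (fiber_bounded y2)].
  apply Rnot_lt_le; intro Hc. pose proof (H _ Hc) as H1. apply dist_lt_existT in H1. lra.
Qed.

Lemma totproj_surjective x : exists e : Tot F, totproj e = x.
Proof. destruct (proj1 (fiber_kcompmet x)) as [a]. exists (existT _ x a). reflexivity. Qed.

Lemma totdist_self f (h : totproj f = totproj f) : totdist F f f h = 0.
Proof. destruct f as [y a]. rewrite totdist_existT. apply (fiber_bounded y). Qed.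

Lemma totdist_eq0 f g (h : totproj f = totproj g) : totdist F f g h = 0 -> f = g.
Proof.
  destruct f as [y1 a1], g as [y2 a2]. unfold totproj in h; simpl in h. subst y2.
  rewrite totdist_existT. intro H. f_equal. exact (kcompmet_sep k _ (fiber_kcompmet _) _ _ H).
Qed.

Lemma totdist_sym f g (h : totproj f = totproj g) : totdist F f g h = totdist F g f (eq_sym h).
Proof.
  destruct f as [y1 a1], g as [y2 a2]. unfold totproj in h; simpl in h. subst y2.
  rewrite !totdist_existT. apply (kcompmet_sym k _ (fiber_kcompmet _)).
Qed.

Lemma totdist_triangle f g e (h1 : totproj f = totproj g) (h2 : totproj g = totproj e)
  (h3 : totproj f = totproj e) : totdist F f e h3 <= totdist F f g h1 + totdist F g e h2.
Proof.
  destruct f as [y1 a1], g as [y2 a2], e as [y3 a3].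
  unfold totproj in h1, h2; simpl in h1, h2. subst y2 y3.
  rewrite !totdist_existT. apply (kcompmet_triangle k _ (fiber_kcompmet _)).
Qed.

Lemma totdist_le f g (h : totproj f = totproj g) : totdist F f g h <= k.
Proof.
  destruct f as [y1 a1], g as [y2 a2]. unfold totproj in h; simpl in h. subst y2.
  rewrite totdist_existT. apply (fiber_bounded _).
Qed.

Lemma totdist_complete (x : X) (u : nat -> Tot F) : (forall n, totproj (u n) = x) ->
  (forall eps, eps > 0 -> exists N, forall m n (h : totproj (u m) = totproj (u n)),
     (N <= m)%nat -> (N <= n)%nat -> totdist F (u m) (u n) h < eps) ->
  exists l, totproj l = x /\
    forall eps, eps > 0 -> exists N, forall n (h : totproj (u n) = totproj l),
      (N <= n)%nat -> totdist F (u n) l h < eps.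
Proof.
  intros Hu Hc.
  pose (v := fun n => eq_rect _ (fun y => Fib y) (projT2 (u n)) _ (Hu n)).
  assert (Ev : forall n, u n = existT _ x (v n)).
  { intro n. unfold v. generalize (Hu n). destruct (u n) as [y a]. unfold totproj. simpl.
    intro E. subst. reflexivity. }
  assert (Dv : forall m n (h : totproj (u m) = totproj (u n)),
             totdist F (u m) (u n) h = dst (v m) (v n)).
  { intros m n h.
    rewrite (totdist_congr _ _ (existT _ x (v m)) (existT _ x (v n)) h eq_refl (Ev m) (Ev n)).
    apply totdist_existT. }
  destruct (fiber_kcompmet x) as [_ [_ [_ [_ [_ [_ complete]]]]]].
  destruct (complete v) as [l Hl].
  { intros eps He. destruct (Hc eps He) as [N HN]. exists N. intros m n Hm Hn.
    assert (h : totproj (u m) = totproj (u n)) by (rewrite !Hu; reflexivity).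
    rewrite <- (Dv m n h). apply HN; auto. }
  exists (existT _ x l). split; [reflexivity|].
  intros eps He. destruct (Hl eps He) as [N HN]. exists N. intros n h Hn.
  rewrite (totdist_congr _ _ (existT _ x (v n)) (existT _ x l) h eq_refl (Ev n) eq_refl).
  rewrite totdist_existT. apply HN; auto.
Qed.

Definition eventually_close {S} (mu : Ultrafilter S) (b b' : S -> Tot F) : Prop :=
  forall eps, eps > 0 -> umem mu (fun s => dist_lt (b s) (b' s) eps).

Lemma eventually_close_sym {S} (mu : Ultrafilter S) b b' :
  eventually_close mu b b' -> eventually_close mu b' b.
Proof. intros H eps He. apply (u_up (H eps He)). intros s; apply dist_lt_sym. Qed.

Lemma eventually_close_trans {S} (mu : Ultrafilter S) b b' b'' :
  eventually_close mu b b' -> eventually_close mu b' b'' -> eventually_close mu b b''.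
Proof.
  intros H H' eps He. apply (u_up (u_inter (H (eps/2) ltac:(lra)) (H' (eps/2) ltac:(lra)))).
  intros s [h h']. eapply dist_lt_le; [exact (dist_lt_trans h h')|lra].
Qed.

Lemma eventually_close_existT {S} (x : S -> X) mu (a b : forall s, Fib (x s)) :
  up_close (fun s => cm (LF F (x s))) mu a b ->
  eventually_close mu (fun s => existT _ (x s) (a s)) (fun s => existT _ (x s) (b s)).
Proof. intros H eps He. apply (u_up (H eps He)). intros s Hs. apply dist_lt_existT, Hs. Qed.

Definition sigma_rep {S} (x : S -> X) (mu : Ultrafilter S) (f : Tot F) (b : S -> Tot F) : Prop :=
  exists g : Fib (ulim tX x mu), existT _ (ulim tX x mu) g = f /\
  exists b0 : forall s, Fib (x s), is_rep (sigma F S x mu g) b0 /\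
    forall s, b s = existT _ (x s) (b0 s).

Lemma sigma_rep_up_rep {S} (x : S -> X) mu g :
  sigma_rep x mu (existT _ (ulim tX x mu) g)
       (fun s => existT _ (x s) (up_rep (sigma F S x mu g) s)).
Proof.
  exists g. split; auto. exists (up_rep (sigma F S x mu g)). split; auto.
  exact (is_rep_up_rep _ _ (fun s => fiber_bounded (x s)) _).
Qed.

Lemma sigma_rep_exists {S} (x : S -> X) mu f :
  projT1 f = ulim tX x mu -> exists b, sigma_rep x mu f b.
Proof. destruct f as [y a]. simpl. intro E. subst y. eexists. apply sigma_rep_up_rep. Qed.

Lemma sigma_rep_fiber {S} {x : S -> X} {mu f b} : sigma_rep x mu f b ->
  forall s, projT1 (b s) = x s.
Proof. intros [g [_ [b0 [_ Hb]]]] s. rewrite Hb. reflexivity. Qed.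

Lemma sigma_rep_base {S} {x : S -> X} {mu f b} : sigma_rep x mu f b -> projT1 f = ulim tX x mu.
Proof. intros [g [E _]]. rewrite <- E. reflexivity. Qed.

Lemma sigma_rep_close_up_rep {S} {x : S -> X} {mu f b} :
  sigma_rep x mu f b -> exists g, existT _ (ulim tX x mu) g = f /\
    eventually_close mu b (fun s => existT _ (x s) (up_rep (sigma F S x mu g) s)).
Proof.
  intros [g [E [b0 [Hr Hb]]]]. exists g. split; auto.
  apply (is_rep_close _ _ (fun s => fiber_bounded (x s))) in Hr.
  intros eps He. apply (u_up (Hr eps He)). intros s Hs. rewrite Hb. apply dist_lt_existT.
  rewrite (kcompmet_sym k _ (fiber_kcompmet _)). exact Hs.
Qed.

Lemma sigma_rep_unique {S} {x : S -> X} {mu f b b'} :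
  sigma_rep x mu f b -> sigma_rep x mu f b' -> eventually_close mu b b'.
Proof.
  intros H H'. destruct (sigma_rep_close_up_rep H) as [g [E C]].
  destruct (sigma_rep_close_up_rep H') as [g' [E' C']].
  rewrite <- E' in E. apply inj_pair2 in E. subst g'.
  eapply eventually_close_trans; [exact C|]. apply eventually_close_sym; exact C'.
Qed.

Lemma sigma_rep_principal {S} {x : S -> X} {s0 f b} : sigma_rep x (principal s0) f b -> b s0 = f.
Proof.
  intros H. destruct (sigma_rep_close_up_rep H) as [g [E C]].
  pose proof (sigma_principal _ _ _ F S x s0 g) as P.
  rewrite E in P. rewrite <- P. apply dist_lt_eq. intros eps He. exact (C eps He).
Qed.

Lemma sigma_rep_lipschitz {S} {x : S -> X} {mu f f' b b' r} :
  sigma_rep x mu f b -> sigma_rep x mu f' b' -> dist_lt f f' r ->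
  forall eps, eps > 0 -> umem mu (fun s => dist_lt (b s) (b' s) (r + eps)).
Proof.
  intros H H' D eps He.
  destruct (sigma_rep_close_up_rep H) as [g [E C]].
  destruct (sigma_rep_close_up_rep H') as [g' [E' C']].
  subst f f'. apply dist_lt_existT in D.
  pose proof (sigma_lip _ _ _ F S x mu g g') as L.
  assert (Hlt : dst (sigma F S x mu g) (sigma F S x mu g') < r) by lra.
  pose proof (rlim_lt mu _ k (fun s => Rabs_dst_le _ (fun s => fiber_bounded (x s)) s _ _) r Hlt)
    as U.
  apply (u_up (umem_and3 _ _ _ _ U (C (eps/2) ltac:(lra)) (C' (eps/2) ltac:(lra)))).
  intros s [h1 [h2 h3]]. apply (dist_lt_existT (x s)) in h1.
  eapply dist_lt_le; [exact (dist_lt_trans (dist_lt_trans h2 h1) (dist_lt_sym h3))|lra].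
Qed.

(* The associativity axiom (ii) of [sigma], read on canonical representatives. *)
Lemma sigma_assoc_up_rep {S T} (mu : Ultrafilter S) (nu : S -> Ultrafilter T) (x : T -> X)
  (ga : Fib (ulim tX x (ubind mu nu))) (gb : Fib (ulim tX (fun s => ulim tX x (nu s)) mu)) :
  existT (fun y => Fib y) _ ga = existT (fun y => Fib y) _ gb ->
  forall eps, eps > 0 -> umem mu (fun s => umem (nu s) (fun t =>
    dist_lt (existT _ (x t) (up_rep (sigma F T x (ubind mu nu) ga) t))
            (existT _ (x t) (up_rep (sigma F T x (nu s) (up_rep (sigma F S _ mu gb) s)) t))
            eps)).
Proof.
  intros Eab eps He.
  pose proof (sigma_assoc _ _ _ F S T mu nu x ga gb Eab) as A.
  set (P := sigma F T x (ubind mu nu) ga) in *.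
  set (Q := sigma F S (fun s => ulim tX x (nu s)) mu gb) in *.
  unfold up_diag, up_map in A.
  pose proof (up_class_inj _ mu (fun s => UP_bounded_dist _ (nu s)
    (fun t => fiber_bounded (x t))) _ _ A (eps/2) ltac:(lra)) as CA.
  apply (u_up CA). intros s h1. simpl in h1.
  pose proof (rlim_lt (nu s) _ k
    (fun t => Rabs_dst_le _ (fun t => fiber_bounded (x t)) t _ _) _ h1) as R1.
  pose proof (up_rep_class _ (nu s) (fun t => fiber_bounded (x t)) (up_rep P)
    (eps/2) ltac:(lra)) as R2.
  apply (u_up (u_inter R1 R2)). intros t [r1 r2].
  apply (dist_lt_existT (x t)) in r1. apply (dist_lt_existT (x t)), dist_lt_sym in r2.
  eapply dist_lt_le; [exact (dist_lt_trans r2 r1)|lra].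
Qed.

Lemma sigma_rep_assoc {S T} (mu : Ultrafilter S) (nu : S -> Ultrafilter T) (x : T -> X)
  f b c c' :
  sigma_rep x (ubind mu nu) f b -> sigma_rep (fun s => ulim tX x (nu s)) mu f c ->
  (forall s, sigma_rep x (nu s) (c s) (c' s)) ->
  forall eps, eps > 0 -> umem mu (fun s => umem (nu s) (fun t => dist_lt (b t) (c' s t) eps)).
Proof.
  intros Hb Hc Hc' eps He.
  destruct (sigma_rep_close_up_rep Hb) as [ga [Ea Cb]].
  destruct (sigma_rep_close_up_rep Hc) as [gb [Eb Cc]].
  assert (Eab : existT (fun y => Fib y) _ ga = existT (fun y => Fib y) _ gb)
    by (rewrite Ea, Eb; reflexivity).
  set (d := eps / 5). assert (Hd : d > 0) by (unfold d; lra).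
  pose proof (Cb d Hd) as Cb'. cbn in Cb'.
  apply (u_up (umem_and3 _ _ _ _ Cb' (sigma_assoc_up_rep mu nu x ga gb Eab d Hd) (Cc d Hd))).
  intros s [h1 [h2 h3]].
  pose proof (sigma_rep_lipschitz (Hc' s) (sigma_rep_up_rep x (nu s) _) h3 d Hd) as R3.
  apply (u_up (umem_and3 _ _ _ _ h1 h2 R3)). intros t [r1 [r2 r3]].
  eapply dist_lt_le;
    [exact (dist_lt_trans (dist_lt_trans r1 r2) (dist_lt_sym r3))|unfold d; lra].
Qed.

Lemma qrel_iff eta f :
  qrel F eta f <-> conv tX (push totproj eta) (projT1 f) /\
    forall b, sigma_rep (fun y => y) (push totproj eta) f b ->
      forall eps, eps > 0 -> umem eta (fun e => dist_lt e (b (projT1 e)) eps).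
Proof.
  split.
  - intros [Hc Hq]. split; [exact Hc|].
    intros b [g [E [b0 [Hr Hb]]]] eps He.
    apply (u_up (Hq g E b0 Hr eps He)). intros [y a] Hd. rewrite Hb. apply dist_lt_existT, Hd.
  - intros [Hc Hq]. split; [exact Hc|].
    intros g E b0 Hr eps He.
    assert (Hs : sigma_rep (fun y => y) (push totproj eta) f (fun y => existT _ y (b0 y))).
    { exists g. split; auto. exists b0. split; auto. }
    apply (u_up (Hq _ Hs eps He)). intros [y a] Hd. apply dist_lt_existT in Hd. exact Hd.
Qed.

Lemma qrel_conv {eta f} : qrel F eta f -> conv tX (push totproj eta) (projT1 f).
Proof. intros [h _]; exact h. Qed.

Lemma qrel_approx {eta f b} : qrel F eta f -> sigma_rep (fun y => y) (push totproj eta) f b ->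
  forall eps, eps > 0 -> umem eta (fun e => dist_lt e (b (projT1 e)) eps).
Proof. intros H. apply qrel_iff in H. apply H. Qed.

Context (cX : compact_space tX) (hX : hausdorff_space tX).

Lemma sigma_rep_conv {mu : Ultrafilter X} {f b} :
  sigma_rep (fun y => y) mu f b -> conv tX mu (projT1 f).
Proof.
  intro Hb. rewrite (sigma_rep_base Hb), <- (push_id mu) at 1. apply (ulim_conv tX cX).
Qed.

Lemma qrel_sigma_rep {eta f} : qrel F eta f ->
  exists b, sigma_rep (fun y => y) (push totproj eta) f b.
Proof. intros H. apply sigma_rep_exists. symmetry. apply ulim_id, qrel_conv, H; assumption. Qed.

Lemma qrel_intro eta f b : sigma_rep (fun y => y) (push totproj eta) f b ->
  (forall eps, eps > 0 -> umem eta (fun e => dist_lt e (b (projT1 e)) eps)) -> qrel F eta f.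
Proof.
  intros Hb Hq. apply qrel_iff. split; [exact (sigma_rep_conv Hb)|].
  intros b' Hb' eps He.
  pose proof (sigma_rep_unique Hb Hb' (eps/2) ltac:(lra)) as C. cbn in C.
  apply (u_up (u_inter (Hq (eps/2) ltac:(lra)) C)). intros e [h1 h2].
  eapply dist_lt_le; [exact (dist_lt_trans h1 h2)|lra].
Qed.

Lemma qrel_principal f : qrel F (principal f) f.
Proof.
  assert (E : push totproj (principal f) = principal (projT1 f)) by apply push_principal.
  destruct (sigma_rep_exists (fun y => y) (push totproj (principal f)) f) as [b Hb].
  { rewrite E, ulim_principal; auto. }
  apply (qrel_intro _ _ b Hb).
  intros eps He. cbn. rewrite E in Hb. rewrite (sigma_rep_principal Hb). apply dist_lt_refl, He.
Qed.

Lemma qrel_push_close {I} (XX : Ultrafilter I) (fi : I -> Tot F) g c :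
  qrel F (push fi XX) g -> sigma_rep (fun i => projT1 (fi i)) XX g c ->
  eventually_close XX c fi.
Proof.
  intros Hg Hc. set (x := fun i => projT1 (fi i)) in Hc.
  destruct (qrel_sigma_rep Hg) as [a Ha].
  assert (Ha' : sigma_rep (fun y => y) (ubind XX (fun i => principal (x i))) g a).
  { replace (ubind XX (fun i => principal (x i))) with (push totproj (push fi XX)); [exact Ha|].
    apply ultrafilter_ext; cbn; tauto. }
  destruct (choice (fun i b' => sigma_rep (fun y => y) (principal (x i)) (c i) b')) as [c' Hc'].
  { intro i. apply sigma_rep_exists. rewrite (sigma_rep_fiber Hc).
    symmetry. exact (ulim_principal tX cX hX (fun y => y) (x i)). }
  assert (Hc2 : sigma_rep (fun i => ulim tX (fun y => y) (principal (x i))) XX g c).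
  { replace (fun i => ulim tX (fun y => y) (principal (x i))) with x; [exact Hc|].
    apply functional_extensionality; intro i.
    symmetry. exact (ulim_principal tX cX hX (fun y => y) (x i)). }
  intros eps He.
  pose proof (sigma_rep_assoc XX _ (fun y => y) g a c c' Ha' Hc2 Hc' (eps/2) ltac:(lra)) as A.
  pose proof (qrel_approx Hg Ha (eps/2) ltac:(lra)) as Q.
  cbn in A, Q. apply (u_up (u_inter A Q)). intros i [h1 h2].
  rewrite (sigma_rep_principal (Hc' i)) in h1.
  eapply dist_lt_le; [exact (dist_lt_trans (dist_lt_sym h1) (dist_lt_sym h2))|lra].
Qed.

(* Barr's multiplication axiom for q. *)
Lemma qrel_ubind {I} (XX : Ultrafilter I) (eta : I -> Ultrafilter (Tot F)) (fi : I -> Tot F) g :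
  (forall i, qrel F (eta i) (fi i)) -> qrel F (push fi XX) g -> qrel F (ubind XX eta) g.
Proof.
  intros Hi Hg.
  pose (mu := fun i => push totproj (eta i)).
  pose (x := fun i => projT1 (fi i)).
  assert (Hx : conv tX (push x XX) (projT1 g)).
  { replace (push x XX) with (push totproj (push fi XX)); [exact (qrel_conv Hg)|].
    apply ultrafilter_ext; cbn; tauto. }
  assert (Ebind : push totproj (ubind XX eta) = ubind XX mu) by apply push_ubind.
  destruct (sigma_rep_exists (fun y => y) (ubind XX mu) g) as [b Hb].
  { symmetry. apply ulim_id; auto. apply conv_ubind with (x := x); auto.
    intro i; apply qrel_conv, Hi. }
  destruct (sigma_rep_exists x XX g) as [c Hc].
  { symmetry. apply ulim_eq; auto. }
  destruct (choice (fun i b' => sigma_rep (fun y => y) (mu i) (c i) b')) as [c' Hc'].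
  { intro i. apply sigma_rep_exists. rewrite (sigma_rep_fiber Hc).
    symmetry. apply ulim_id, qrel_conv, Hi; assumption. }
  assert (Hcmu : sigma_rep (fun i => ulim tX (fun y => y) (mu i)) XX g c).
  { replace (fun i => ulim tX (fun y => y) (mu i)) with x; [exact Hc|].
    apply functional_extensionality; intro i. symmetry. apply ulim_id, qrel_conv, Hi; assumption. }
  rewrite <- Ebind in Hb. apply (qrel_intro _ _ b Hb). rewrite Ebind in Hb.
  intros eps He. set (d := eps / 5). assert (Hd : d > 0) by (unfold d; lra).
  pose proof (sigma_rep_assoc XX mu (fun y => y) g b c c' Hb Hcmu Hc' d Hd) as A.
  apply (u_up (u_inter A (qrel_push_close XX fi g c Hg Hc d Hd))). intros i [h1 h2]. cbn.
  destruct (qrel_sigma_rep (Hi i)) as [ai Hai].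
  pose proof (sigma_rep_lipschitz (Hc' i) Hai h2 d Hd) as L.
  unfold mu in h1, L. cbn in h1, L.
  apply (u_up (umem_and3 _ _ _ _ h1 L (qrel_approx (Hi i) Hai d Hd))).
  intros e [r1 [r2 r3]].
  eapply dist_lt_le;
    [exact (dist_lt_trans r3 (dist_lt_sym (dist_lt_trans r1 r2)))|unfold d; lra].
Qed.

Lemma push_totproj_fst_snd (zeta : Ultrafilter (Tot F * Tot F)) :
  umem zeta (fun p => projT1 (fst p) = projT1 (snd p)) ->
  push totproj (push fst zeta) = push totproj (push snd zeta).
Proof.
  intros H. apply ultrafilter_ext. intro A. cbn. split; apply umem_congr with (1 := H);
  intros p E; unfold totproj; rewrite E; tauto.
Qed.

(* Upper semicontinuity of the distance, in terms of q. *)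
Lemma qrel_pair_totdist_lt (zeta : Ultrafilter (Tot F * Tot F)) f g h r :
  qrel F (push fst zeta) f -> qrel F (push snd zeta) g -> totdist F f g h < r ->
  umem zeta (fun p => forall h', totdist F (fst p) (snd p) h' < r).
Proof.
  intros Qf Qg Hr.
  destruct (u_ultra _ zeta (fun p => projT1 (fst p) = projT1 (snd p))) as [Z|Z];
    [|apply (u_up Z); intros p Np h'; contradiction].
  destruct (qrel_sigma_rep Qf) as [bf Hbf].
  destruct (qrel_sigma_rep Qg) as [bg Hbg].
  rewrite <- (push_totproj_fst_snd zeta Z) in Hbg.
  set (d := (r - totdist F f g h) / 4). assert (Hd : d > 0) by (unfold d; lra).
  assert (Dfg : dist_lt f g (totdist F f g h + d)) by (exists h; lra).
  pose proof (sigma_rep_lipschitz Hbf Hbg Dfg d Hd) as L.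
  pose proof (qrel_approx Qf Hbf d Hd) as Q1.
  rewrite (push_totproj_fst_snd zeta Z) in Hbg.
  pose proof (qrel_approx Qg Hbg d Hd) as Q2.
  cbn in L, Q1, Q2.
  apply (u_up (u_inter (umem_and3 _ _ _ _ Z L Q1) Q2)).
  intros [a b] [[E [l q1]] q2] h'. simpl in *. apply dist_ltE.
  unfold totproj in l. rewrite E in l, q1.
  eapply dist_lt_le; [exact (dist_lt_trans (dist_lt_trans q1 l) (dist_lt_sym q2))|unfold d; lra].
Qed.

Lemma qrel_fst_of_close (zeta : Ultrafilter (Tot F * Tot F)) f :
  qrel F (push snd zeta) f ->
  (forall eps, eps > 0 -> umem zeta (fun p => dist_lt (fst p) (snd p) eps)) ->
  qrel F (push fst zeta) f.
Proof.
  intros Qf Z.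
  assert (E : push totproj (push fst zeta) = push totproj (push snd zeta)).
  { apply push_totproj_fst_snd. apply (u_up (Z 1 ltac:(lra))).
    intros p D. exact (dist_lt_fiber D). }
  destruct (qrel_sigma_rep Qf) as [b Hb].
  apply (qrel_intro _ _ b); [rewrite E; exact Hb|].
  intros eps He. pose proof (qrel_approx Qf Hb (eps/2) ltac:(lra)) as Q.
  cbn in Q |- *. apply (u_up (u_inter Q (Z (eps/2) ltac:(lra)))).
  intros [a c] [q D]. simpl in *. rewrite (dist_lt_fiber D).
  eapply dist_lt_le; [exact (dist_lt_trans D q)|lra].
Qed.

Definition qopen (U : Tot F -> Prop) : Prop :=
  forall eta f, qrel F eta f -> U f -> umem eta U.

Definition qtopology : Topology (Tot F).
Proof.
  refine {| isopen := qopen |}.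
  - intros eta f _ _. apply umem_all; auto.
  - intros U V hU hV eta f H [Uf Vf]. apply u_inter; eauto.
  - intros I U hU eta f H [i Ui]. apply (u_up (hU i eta f H Ui)). eauto.
Defined.

Definition qclosure (A : Tot F -> Prop) (g : Tot F) : Prop :=
  exists eta, umem eta A /\ qrel F eta g.

Lemma qopen_not_qclosure (A : Tot F -> Prop) : qopen (fun g => ~ qclosure A g).
Proof.
  intros eta g Hq Cg. destruct (u_ultra _ eta (fun g => ~ qclosure A g)) as [|H]; auto.
  exfalso. apply Cg.
  destruct (choice (fun h e => qrel F e h /\ (qclosure A h -> umem e A))) as [et Het].
  { intro h. destruct (classic (qclosure A h)) as [[e [h1 h2]]|N].
    - exists e. auto.
    - exists (principal h). split; [apply qrel_principal|tauto]. }
  exists (ubind eta et). split.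
  - cbn. apply (u_up H). intros h Hh. apply Het. apply NNPP; exact Hh.
  - apply (qrel_ubind eta et (fun h => h)); [intro h; apply Het|rewrite push_id; exact Hq].
Qed.

Lemma qrel_of_qclosure eta f : (forall A, umem eta A -> qclosure A f) -> qrel F eta f.
Proof.
  intros H.
  destruct (choice (fun A e => qrel F e f /\ (umem eta A -> umem e A))) as [et Het].
  { intro A. destruct (classic (umem eta A)) as [HA|N].
    - destruct (H A HA) as [e [h1 h2]]. exists e; auto.
    - exists (principal f). split; [apply qrel_principal|tauto]. }
  (* [XX] concentrates on arbitrarily small members of [eta], so [ubind XX et] refines [eta]. *)
  destruct (ultrafilter_extension (Tot F -> Prop) (fun P => exists B, umem eta B /\
              forall A, umem eta A -> (forall e, A e -> B e) -> P A)) as [XX HXX].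
  - exists (fun _ => True). split; [apply umem_all; auto|auto].
  - intros P Q [B1 [h1 k1]] [B2 [h2 k2]]. exists (fun e => B1 e /\ B2 e).
    split; [apply u_inter; auto|]. intros A HA sA. split.
    + apply k1; auto. intros e Ae; apply (sA e Ae).
    + apply k2; auto. intros e Ae; apply (sA e Ae).
  - intros P [B [h1 k1]]. exists B. apply k1; auto.
  - replace eta with (ubind XX et).
    + apply (qrel_ubind XX et (fun _ => f)); [intro A; apply Het|].
      rewrite push_const. apply qrel_principal.
    + symmetry. apply ultrafilter_le_eq. intros B HB. cbn. apply HXX. exists B. split; auto.
      intros A HA sA. apply (u_up (proj2 (Het A) HA)). exact sA.
Qed.

Lemma conv_qtopology eta f : conv qtopology eta f <-> qrel F eta f.
Proof.
  split; [|intros H U oU Uf; exact (oU eta f H Uf)].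
  intros Hc. apply qrel_of_qclosure. intros A HA. apply NNPP; intro N.
  destruct (umem_exists _ _ (u_inter HA (Hc _ (qopen_not_qclosure A) N))) as [h [Ah Nh]].
  apply Nh. exists (principal h). split; [exact Ah|apply qrel_principal].
Qed.

Section Bundle.
Variable tau : Topology (Tot F).
Hypothesis conv_tau : forall eta f, conv tau eta f <-> qrel F eta f.

Lemma totproj_continuous : continuous_map tau tX totproj.
Proof.
  intros V oV. apply open_of_conv. intros eta e Hc Ve.
  exact (qrel_conv (proj1 (conv_tau _ _) Hc) V oV Ve).
Qed.

Lemma totproj_open : open_map tau tX totproj.
Proof.
  intros U oU. apply open_of_conv. intros mu y Hc [a [Ua Ea]].
  destruct (sigma_rep_exists (fun y => y) mu a) as [b Hb].
  { unfold totproj in Ea. rewrite Ea. symmetry. apply ulim_id; auto. }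
  pose proof (sigma_rep_fiber Hb) as Fb. simpl in Fb.
  assert (E : push totproj (push b mu) = mu).
  { apply ultrafilter_ext; intro A. cbn. unfold totproj.
    split; apply umem_congr with (E := fun _ => True);
      try (apply umem_all; auto); intros s _; rewrite Fb; tauto. }
  assert (Q : qrel F (push b mu) a).
  { apply (qrel_intro _ _ b); [rewrite E; exact Hb|].
    intros eps He. cbn. apply umem_all. intro s. rewrite Fb. apply dist_lt_refl, He. }
  pose proof (proj2 (conv_tau _ _) Q U oU Ua) as HU. cbn in HU.
  apply (u_up HU). intros s Us. exists (b s). split; auto. apply Fb.
Qed.

Lemma totdist_usc r : exists O, prod_open tau tau O /\
  forall f g (h : totproj f = totproj g), totdist F f g h < r <-> O (f, g).
Proof.
  exists (fun p => exists U V, isopen tau U /\ isopen tau V /\ U (fst p) /\ V (snd p) /\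
            forall a b, U a -> V b -> forall h, totdist F a b h < r).
  split.
  - intros p [U [V [oU [oV [Up [Vp H]]]]]]. exists U, V. repeat split; auto.
    intros a b Ua Vb. exists U, V. repeat split; auto.
  - intros f g h. split; [|intros [U [V [_ [_ [Uf [Vg H]]]]]]; apply H; auto].
    intros Hd.
    destruct (prod_nbhd_of_conv tau tau f g
      (fun p => forall h, totdist F (fst p) (snd p) h < r)) as [U [V [oU [oV [Uf [Vg H]]]]]].
    + intros zeta Cf Cg.
      apply (qrel_pair_totdist_lt zeta f g h r); [apply conv_tau..|]; assumption.
    + exists U, V. repeat split; auto.
Qed.

Lemma thickening_in_open (W : Tot F -> Prop) f : isopen tau W -> W f ->
  exists V eps, isopen tau V /\ V f /\ eps > 0 /\ forall e g, V g -> dist_lt e g eps -> W e.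
Proof.
  intros oW Wf. apply NNPP; intro N.
  destruct (ultrafilter_extension (Tot F * Tot F) (fun P => exists V eps, isopen tau V /\ V f /\
      eps > 0 /\ forall e g, V g -> dist_lt e g eps -> ~ W e -> P (e, g))) as [zeta Hz].
  - exists (fun _ => True), 1. repeat split; try apply op_full; auto; lra.
  - intros P Q [V1 [e1 [o1 [f1 [p1 H1]]]]] [V2 [e2 [o2 [f2 [p2 H2]]]]].
    exists (fun a => V1 a /\ V2 a), (Rmin e1 e2). repeat split; try apply op_inter; auto.
    + apply Rmin_glb_lt; auto.
    + apply H1; try tauto. eapply dist_lt_le; eauto. apply Rmin_l.
    + apply H2; try tauto. eapply dist_lt_le; eauto. apply Rmin_r.
  - intros P [V [eps [oV [Vf [He H]]]]]. apply NNPP; intro N2. apply N.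
    exists V, eps. repeat split; auto. intros e g Vg D. apply NNPP; intro N3.
    apply N2. exists (e, g). apply H; auto.
  - assert (Z : forall eps, eps > 0 ->
                 umem zeta (fun p => dist_lt (fst p) (snd p) eps /\ ~ W (fst p))).
    { intros eps He. apply Hz. exists (fun _ => True), eps.
      repeat split; try apply op_full; auto. }
    assert (Qsnd : qrel F (push snd zeta) f).
    { apply conv_tau. intros U oU Uf. cbn. apply Hz. exists U, 1. repeat split; auto; lra. }
    assert (Qfst : qrel F (push fst zeta) f).
    { apply (qrel_fst_of_close zeta f Qsnd). intros eps He.
      apply (u_up (Z eps He)). tauto. }
    pose proof (proj2 (conv_tau _ _) Qfst W oW Wf) as HW. cbn in HW.
    destruct (umem_exists _ _ (u_inter HW (Z 1 ltac:(lra)))) as [p [Wp [_ NWp]]].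
    contradiction.
Qed.

Lemma is_bundle_tot : is_bundle k tau tX totproj (totdist F).
Proof.
  split; [exact totproj_surjective|]. split; [exact totdist_self|].
  split; [exact totdist_eq0|]. split; [exact totdist_sym|].
  split; [exact totdist_triangle|]. split; [exact totdist_le|].
  split; [exact totdist_complete|]. split; [exact totdist_usc|].
  split; [exact totproj_continuous|]. split; [exact totproj_open|].
  intros W f oW Wf. destruct (thickening_in_open W f oW Wf) as [V [eps [oV [Vf [He H]]]]].
  exists V, eps. do 3 (split; [assumption|]). cbv zeta. split.
  - intros e Ve. exists e, eq_refl. split; auto. apply dist_ltE, dist_lt_refl, He.
  - intros e [g [h [Vg D]]]. apply (H e g Vg). exists h; exact D.
Qed.

End Bundle.

End TotalSpace.

(** * Natural transformations *)

Section Morphisms.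
Context {k : R} {X : Type} {tX : Topology X} (cX : compact_space tX) (hX : hausdorff_space tX)
  {F G : LeftUlt k X tX} (alpha : forall x, cm (LF F x) -> cm (LF G x)).
Hypothesis alpha_nat : is_nat_trans F G alpha.

Lemma dist_lt_totmap {e1 e2 r} :
  dist_lt e1 e2 r -> dist_lt (totmap alpha e1) (totmap alpha e2) r.
Proof.
  destruct e1 as [y1 a1], e2 as [y2 a2]. intro D.
  pose proof (dist_lt_fiber D) as h. simpl in h. subst y2.
  apply dist_lt_existT in D. apply dist_lt_existT.
  eapply Rle_lt_trans; [apply (proj1 alpha_nat)|exact D].
Qed.

Lemma sigma_rep_totmap {S} (x : S -> X) mu e b b' :
  sigma_rep x mu e b -> sigma_rep x mu (totmap alpha e) b' ->
  eventually_close mu (fun s => totmap alpha (b s)) b'.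
Proof.
  intros Hb Hb'.
  destruct (sigma_rep_close_up_rep Hb) as [g [Eg C]]. subst e.
  pose proof (sigma_rep_unique Hb' (sigma_rep_up_rep x mu (alpha _ g))) as C2.
  rewrite (proj2 alpha_nat) in C2. unfold up_map in C2.
  pose proof (eventually_close_existT x mu _ _ (up_rep_class _ mu
    (fun s => fiber_bounded (F := G) (x s))
    (fun s => alpha (x s) (up_rep (sigma F S x mu g) s)))) as C3.
  intros eps He.
  apply (u_up (umem_and3 _ _ _ _ (C (eps/3) ltac:(lra)) (C2 (eps/3) ltac:(lra))
                                 (C3 (eps/3) ltac:(lra)))).
  intros s [h1 [h2 h3]]. apply dist_lt_totmap in h1.
  eapply dist_lt_le;
    [exact (dist_lt_trans (dist_lt_trans h1 (dist_lt_sym h3)) (dist_lt_sym h2))|lra].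
Qed.

Lemma qrel_totmap eta e : qrel F eta e -> qrel G (push (totmap alpha) eta) (totmap alpha e).
Proof.
  intros Q.
  assert (E : push totproj (push (totmap alpha) eta) = push totproj eta)
    by (apply ultrafilter_ext; cbn; tauto).
  destruct (qrel_sigma_rep cX hX Q) as [b Hb].
  destruct (sigma_rep_exists (F := G) (fun y => y) (push totproj eta) (totmap alpha e))
    as [b' Hb'].
  { exact (sigma_rep_base Hb). }
  apply (qrel_intro cX _ _ b'); [rewrite E; exact Hb'|].
  intros eps He.
  pose proof (sigma_rep_totmap _ _ _ _ _ Hb Hb' (eps/2) ltac:(lra)) as C.
  pose proof (qrel_approx Q Hb (eps/2) ltac:(lra)) as Q2.
  cbn in C |- *. apply (u_up (u_inter C Q2)). intros s [c q].
  apply dist_lt_totmap in q. eapply dist_lt_le; [exact (dist_lt_trans q c)|lra].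
Qed.

Lemma totmap_bundle_morphism (tauF : Topology (Tot F)) (tauG : Topology (Tot G)) :
  (forall eta f, conv tauF eta f <-> qrel F eta f) ->
  (forall eta f, conv tauG eta f <-> qrel G eta f) ->
  is_bundle_morphism tauF tauG totproj totproj (totdist F) (totdist G) (totmap alpha).
Proof.
  intros convF convG. split; [|split].
  - intros V oV. apply open_of_conv. intros eta e Hc Ve.
    exact (proj2 (convG _ _) (qrel_totmap eta e (proj1 (convF _ _) Hc)) V oV Ve).
  - reflexivity.
  - intros [y1 a1] [y2 a2] h h'. unfold totproj in h; simpl in h. subst y2.
    unfold totmap. simpl. rewrite !totdist_existT. apply (proj1 alpha_nat).
Qed.

End Morphisms.

Theorem mainTheorem2 (k : R) (X : Type) (tX : Topology X) :
  compact_space tX -> hausdorff_space tX ->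
  (forall F : LeftUlt k X tX,
     (exists tau : Topology (Tot F),
        forall eta f, conv tau eta f <-> qrel F eta f) /\
     (forall tau : Topology (Tot F),
        (forall eta f, conv tau eta f <-> qrel F eta f) ->
        is_bundle k tau tX totproj (totdist F))) /\
  (forall (F G : LeftUlt k X tX) (alpha : forall x, cm (LF F x) -> cm (LF G x)),
     is_nat_trans F G alpha ->
     forall (tauF : Topology (Tot F)) (tauG : Topology (Tot G)),
       (forall eta f, conv tauF eta f <-> qrel F eta f) ->
       (forall eta f, conv tauG eta f <-> qrel G eta f) ->
       is_bundle_morphism tauF tauG totproj totproj (totdist F) (totdist G)
         (totmap alpha)) /\
  (forall F : LeftUlt k X tX,
     totmap (G := F) (fun x (f : cm (LF F x)) => f) = (fun e => e)) /\
  (forall (F G H : LeftUlt k X tX) (alpha : forall x, cm (LF F x) -> cm (LF G x))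
          (beta : forall x, cm (LF G x) -> cm (LF H x)),
     totmap (fun x f => beta x (alpha x f)) = (fun e => totmap beta (totmap alpha e))).
Proof.
  intros cX hX. split; [|split; [|split]].
  - intro F. split.
    + exists (qtopology (F := F)). exact (conv_qtopology cX hX).
    + intros tau conv_tau. exact (is_bundle_tot cX hX tau conv_tau).
  - intros F G alpha alpha_nat. exact (totmap_bundle_morphism cX hX alpha alpha_nat).
  - intro F. apply functional_extensionality. intros [y a]. reflexivity.
  - intros F G H alpha beta. apply functional_extensionality. intros [y a]. reflexivity.
Qed.
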